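(* Let $2\le n<d$ with $n=2$ or $n$ odd, let $n'=\min\{2n-1,d\}$, let $t$ be as defined below, let $E\in\mathrm{SL}(d,q)$ and put $T:=t^E=E^{-1}tE$. Suppose $T$ is a weak doubling element. Then: (1) $\dim(V_n\cap \mathrm{Fix}(T))\ge 1$, and if $n'<d$ then $\dim(V_n\cap\mathrm{Fix}(T))=1$; (2) if $n'<d$, then $\dim(F_{d-n}\cap \mathrm{Fix}(T))=d-n'$.
   Context: Vectors are row vectors and matrices act from the right; $\mathrm{Fix}(g)=\{x\in\mathbb{F}_q^d: xg=x\}$. $e_1,\dots,e_d$ is the standard basis of $V=\mathbb{F}_q^d$, $V_n=\langle e_1,\dots,e_n\rangle$, $F_{d-n}=\langle e_{n+1},\dots,e_d\rangle$, and $n'=\min\{2n-1,d\}$. An element $c\in\mathrm{GL}(d,q)$ is a weak doubling element if (C1) $\dim(V_n+V_nc)=n'$ and (C2) if $n'<d$ then $\dim(F_{d-n}+\mathrm{Fix}(c))=d$. $E_{i,j}(\lambda)$ is the identity matrix with $(i,j)$ entry replaced by $\lambda$ ($i\ne j$). The element $t$ is: $E_{1,2}(1)$ if $n=2$; $\operatorname{diag}(z_1,I_{d-n})$ if $n>2$ and $p=2$; $\operatorname{diag}(z_2,I_{d-n})$ if $n>2$ and $p$ odd, where ($P_\sigma$ being the $n\times n$ matrix with $e_iP_\sigma=e_{\sigma(i)}$) $z_1=P_{(1,n,n-1,\dots,2)}$ with $(1,n)$ entry changed to $-1$ if $n$ is even, and $z_2=P_{(2,n,n-1,\dots,3)}$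 with $(2,n)$ entry changed to $-1$ if $n$ is odd. In particular $\dim\mathrm{Fix}(t)=d-n+1$. *)

(* Matrices act on row vectors from the right, as in the paper.
   Indices are 0-based: e_{i+1} of the paper is the i-th basis row vector. *)
From HB Require Import structures.
From mathcomp Require Import all_boot all_order all_algebra all_fingroup all_field.
Set Implicit Arguments. Unset Strict Implicit. Unset Printing Implicit Defensive.
Import GRing.Theory.
Local Open Scope ring_scope.

Section Defs.
Variables (F : finFieldType) (d : nat).

Definition Fix (g : 'M[F]_d) : 'M[F]_d := kermx (g - 1%:M).

(* V_n = <e_1,...,e_n>,  F_{d-n} = <e_{n+1},...,e_d> *)
Definition Vn (n : nat) : 'M[F]_d := pid_mx n.
Definition Fdn (n : nat) : 'M[F]_d := copid_mx n.

Definition nprime (n : nat) : nat := minn (2 * n - 1) d.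

Definition weak_doubling (n : nat) (c : 'M[F]_d) : Prop :=
  c \in unitmx /\
  \rank (Vn n + Vn n *m c)%MS = nprime n /\
  (nprime n < d -> \rank (Fdn n + Fix c)%MS = d)%N.

(* z1 (0-based): sigma(0)=n-1, sigma(i)=i-1 for 1<=i<n; entry (0,n-1) is -1 if n even *)
Definition z1_entry (n i j : nat) : F :=
  if i == 0%N then (if j == n.-1 then (if ~~ odd n then -1 else 1) else 0)
  else (if j == i.-1 then 1 else 0).

(* z2 (0-based): sigma(0)=0, sigma(1)=n-1, sigma(i)=i-1 for 2<=i<n;
   entry (1,n-1) is -1 if n odd *)
Definition z2_entry (n i j : nat) : F :=
  if i == 0%N then (if j == 0%N then 1 else 0)
  else if i == 1%N then (if j == n.-1 then (if odd n then -1 else 1) else 0)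
  else (if j == i.-1 then 1 else 0).

Definition t_elt (n : nat) : 'M[F]_d :=
  \matrix_(i < d, j < d)
    if n == 2%N then
      (if (nat_of_ord i == 0%N) && (nat_of_ord j == 1%N) then 1
       else (i == j)%:R)
    else if (i < n)%N && (j < n)%N then
      (if 2 \in [pchar F] then z1_entry n i j else z2_entry n i j)
    else (i == j)%:R.

End Defs.

(* The element t fixes F_{d-n} pointwise, and its fixed vectors are determined on V_n
   up to a scalar multiple of a single vector: e_2 for the transvection (n = 2),
   e_1 + ... + e_n for the n-cycle (p = 2), e_1 for the signed cycle (p odd), the
   last case because v_2 = ... = v_n = -v_2 forces v_2 = 0.  Hence
   dim Fix(t) = d - n + 1, and the same holds for its conjugate T.
   Then dim (V_n cap Fix T) >= n + (d - n + 1) - d = 1.  If n' = 2n - 1 < d, then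
   2n - 1 = dim (V_n + V_n T) = dim (V_n + V_n (T - 1)) <= n + (n - dim (V_n cap Fix T)),
   so that intersection is a line; and F_{d-n} + Fix T = V gives
   dim (F_{d-n} cap Fix T) = (d - n) + (d - n + 1) - d = d - n'. *)

From HB Require Import structures.
From mathcomp Require Import all_boot all_order all_algebra all_fingroup all_field.
From mathcomp Require Import zify.
Set Implicit Arguments.
Unset Strict Implicit.
Unset Printing Implicit Defensive.
Import GRing.Theory.
Local Open Scope ring_scope.

Section PartialIdentity.
Variables (F : fieldType) (d n : nat).

Lemma mulmx_pid_mxE m (A : 'M[F]_(m, d)) i j :
  (A *m pid_mx n) i j = if (j < n)%N then A i j else 0.
Proof.
rewrite mxE (bigD1 j) //= big1 ?addr0 => [|k /negbTE nkj]; rewrite mxE.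
  by rewrite eqxx /=; case: ifP; rewrite ?mulr1 ?mulr0.
by rewrite [_ == _ :> nat]nkj mulr0.
Qed.

Lemma pid_mx_mulmxE m (A : 'M[F]_(d, m)) i j :
  (pid_mx n *m A) i j = if (i < n)%N then A i j else 0.
Proof.
rewrite mxE (bigD1 i) //= big1 ?addr0 => [|k /negbTE nki]; rewrite mxE.
  by rewrite eqxx /=; case: ifP; rewrite ?mul1r ?mul0r.
by rewrite eq_sym [_ == _ :> nat]nki mul0r.
Qed.

Lemma capmx_copid_pid : (n <= d)%N -> (copid_mx n :&: (pid_mx n : 'M[F]_d))%MS = 0.
Proof.
move=> le_n_d; set X := (copid_mx n :&: _)%MS.
have /submxP[D defX] : (X <= copid_mx n)%MS by apply: capmxSl.
have /submxP[D' defX'] : (X <= (pid_mx n : 'M[F]_d))%MS by apply: capmxSr.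
have XP : X = X *m pid_mx n by rewrite defX' -mulmxA pid_mx_id.
by rewrite XP defX -mulmxA mul_copid_mx_pid ?mulmx0.
Qed.

End PartialIdentity.

Lemma mulmx_col_deltaE (R : pzSemiRingType) m d (v : 'rV[R]_d) (A : 'M[R]_(d, m)) j a s :
  (forall i, A i j = (i == a)%:R * s) -> (v *m A) 0 j = v 0 a * s.
Proof.
move=> Aj; rewrite mxE (bigD1 a) //= Aj eqxx mul1r big1 ?addr0 // => i /negbTE nia.
by rewrite Aj nia mul0r mulr0.
Qed.

Lemma ord_eq_inord d (j : 'I_d.+1) k : (k <= d)%N -> (j == inord k) = (j == k :> nat).
Proof. by move=> le_k_d; rewrite -val_eqE /= inordK. Qed.

Lemma ord_eq_inordF d (j : 'I_d.+1) k : (k < j)%N -> (j == inord k) = false.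
Proof.
move=> lt_k_j; rewrite ord_eq_inord ?gtn_eqF //.
exact: ltnW (leq_trans lt_k_j (leq_ord j)).
Qed.

Lemma eq_from_succ (T : Type) (f : nat -> T) a b :
  (forall k, (a <= k)%N -> (k.+1 < b)%N -> f k.+1 = f k) ->
  forall k, (a <= k < b)%N -> f k = f a.
Proof.
move=> fS; elim=> [|k IH] /andP[le_a_k lt_k_b]; first by rewrite (_ : a = 0%N) //; lia.
have [-> // | ne_a_k1] := eqVneq a k.+1.
have le_a_k' : (a <= k)%N by lia.
by rewrite fS // IH // le_a_k' ltnW.
Qed.

Section LineKernel.
Variables (F : fieldType) (d n : nat) (A : 'M[F]_d) (u : 'rV[F]_d).
Hypotheses (le_n_d : (n <= d)%N) (u_neq0 : u != 0) (u_pid : u *m pid_mx n = u).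
Hypotheses (A_id : forall i j : 'I_d, (n <= i)%N -> A i j = (i == j)%:R) (uA : u *m A = u).
Hypothesis fixA : forall v, v *m A = v -> exists c, v *m pid_mx n = c *: u.

Lemma copid_mulmx_id : copid_mx n *m A = copid_mx n.
Proof.
rewrite mulmxBl mul1mx; apply/matrixP => i j.
rewrite [LHS]mxE [X in _ + X]mxE pid_mx_mulmxE /copid_mx !mxE.
case: ltnP => [lt_i_n | le_n_i]; first by rewrite andbT !subrr.
by rewrite andbF !subr0 A_id.
Qed.

Lemma kermx_sub1_eq_copid_adds : (kermx (A - 1%:M) == copid_mx n + u)%MS.
Proof.
apply/andP; split.
  apply/row_subP => i; set v := row i (kermx (A - 1%:M)).
  have /eqP : v *m (A - 1%:M) = 0 by rewrite -row_mul mulmx_ker row0.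
  rewrite mulmxBr mulmx1 subr_eq0 => /eqP /fixA[c vc].
  have -> : v = v *m copid_mx n + c *: u by rewrite -vc -mulmxDr subrK mulmx1.
  by apply: addmx_sub_adds; [apply: submxMl | apply: scalemx_sub].
by rewrite addsmx_sub !sub_kermx !mulmxBr !mulmx1 copid_mulmx_id uA !subrr !eqxx.
Qed.

Lemma mxrank_kermx_sub1_line : \rank (kermx (A - 1%:M)) = (d - n).+1.
Proof.
rewrite (eqmxP kermx_sub1_eq_copid_adds) mxrank_disjoint_sum.
  by rewrite rank_copid_mx // rank_rV u_neq0 addn1.
apply/eqP; rewrite -submx0 -(capmx_copid_pid F le_n_d) capmxS //.
by rewrite -u_pid submxMl.
Qed.

End LineKernel.

Lemma mxrank_cap_ge (F : fieldType) m1 m2 d (A : 'M[F]_(m1, d)) (B : 'M[F]_(m2, d)) :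
  (\rank A + \rank B <= d + \rank (A :&: B))%N.
Proof. by rewrite -mxrank_sum_cap leq_add2r rank_leq_col. Qed.

Lemma mxrank_adds_mul_cap_kermx (F : fieldType) m d (U : 'M[F]_(m, d)) (A : 'M[F]_d) :
  (\rank (U + U *m A) + \rank (U :&: kermx (A - 1%:M)) <= \rank U + \rank U)%N.
Proof.
have UA : (U + U *m (A - 1%:M) :=: U + U *m A)%MS.
  by rewrite mulmxBr mulmx1 addrC; apply: addsmx_addKl; rewrite eqmx_opp.
rewrite -UA -{2}(mxrank_mul_ker U (A - 1%:M)) addnCA addnA leq_add2r addnC.
exact: mxrank_adds_leqif.
Qed.

Lemma mxrank_kermx_conj_sub1 (F : fieldType) d (E A : 'M[F]_d) : E \in unitmx ->
  \rank (kermx (invmx E *m A *m E - 1%:M)) = \rank (kermx (A - 1%:M)).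
Proof.
move=> E_unit; have -> : invmx E *m A *m E - 1%:M = invmx E *m (A - 1%:M) *m E.
  by rewrite mulmxBr mulmxBl mulmx1 mulVmx.
by rewrite !mxrank_ker mxrankMfree ?row_free_unit // eqmxMfull ?row_full_unit ?unitmx_inv.
Qed.

Section Zentries.
Variables (F : finFieldType) (n : nat).
Hypotheses (n_odd : odd n) (i k : nat) (lt_i_n : (i < n)%N).

Lemma z1_entry_last : z1_entry F n i n.-1 = (i == 0%N)%:R.
Proof. by rewrite /z1_entry n_odd; case: eqP => [//|ni0]; case: eqP => //; lia. Qed.

Lemma z1_entry_mid : (k.+1 < n)%N -> z1_entry F n i k = (i == k.+1)%:R.
Proof.
move=> lt_k1_n; rewrite /z1_entry; case: eqP => [-> | ni0].
  by case: eqP => //; lia.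
by case: eqP => [->|nk]; case: eqP => //; lia.
Qed.

Lemma z2_entry_last : (1 < n)%N -> z2_entry F n i n.-1 = - (i == 1%N)%:R.
Proof.
move=> n_gt1; rewrite /z2_entry n_odd.
have [-> | ni0] := eqVneq i 0%N; first by case: eqP; [lia | rewrite oppr0].
have [_ | ni1] := eqVneq i 1%N; first by rewrite eqxx.
by case: eqP; [lia | rewrite oppr0].
Qed.

Lemma z2_entry_mid : (0 < k)%N -> (k.+1 < n)%N -> z2_entry F n i k = (i == k.+1)%:R.
Proof.
move=> k_gt0 lt_k1_n; rewrite /z2_entry.
have [-> | ni0] := eqVneq i 0%N; first by case: eqP => //; lia.
have [-> | ni1] := eqVneq i 1%N; first by case: eqP => [|_]; [lia | case: eqP => //; lia].
by case: eqP => [->|nk]; case: eqP => //; lia.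
Qed.

Lemma z2_entry_row0 : z2_entry F n 0 k = (k == 0%N)%:R.
Proof. by rewrite /z2_entry; case: (k == 0%N). Qed.

End Zentries.

Section TElement.
Variables (F : finFieldType) (d n : nat).
Hypotheses (n_ge2 : (2 <= n)%N) (n_le_d : (n <= d)%N).
Local Notation t := (t_elt F d.+1 n).

Lemma t_elt_outside (i j : 'I_d.+1) : ((n <= i) || (n <= j))%N -> t i j = (i == j)%:R.
Proof.
move=> out; rewrite mxE (_ : ((i < n) && (j < n))%N = false); last by lia.
by case: eqP => // n2; rewrite (_ : (i == 0 :> nat) && (j == 1 :> nat) = false) //; lia.
Qed.

Lemma t_elt_inside (i j : 'I_d.+1) : odd n -> (i < n)%N -> (j < n)%N ->
  t i j = if 2 \in [pchar F] then z1_entry F n i j else z2_entry F n i j.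
Proof.
move=> n_odd lt_i_n lt_j_n; rewrite mxE lt_i_n lt_j_n ifN //.
by apply: contraTneq n_odd => ->.
Qed.

Lemma mulmx_t_outside (v : 'rV[F]_d.+1) (j : 'I_d.+1) : (n <= j)%N -> (v *m t) 0 j = v 0 j.
Proof.
move=> le_n_j; rewrite (mulmx_col_deltaE v (a := j) (s := 1)) ?mulr1 // => i.
by rewrite t_elt_outside ?le_n_j ?orbT // mulr1.
Qed.

Lemma mulmx_t_inord (v : 'rV[F]_d.+1) k a s : (k < n)%N -> (a < n)%N ->
  (forall i : 'I_d.+1, (i < n)%N -> t i (inord k) = (i == a :> nat)%:R * s) ->
  (v *m t) 0 (inord k) = v 0 (inord a) * s.
Proof.
move=> lt_k_n lt_a_n tk; apply: mulmx_col_deltaE => i.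
case: (ltnP i n) => [lt_i_n | le_n_i]; first by rewrite tk // ord_eq_inord //; lia.
by rewrite t_elt_outside ?le_n_i // !ord_eq_inordF ?mul0r //; lia.
Qed.

Section Transvection.
Hypothesis n_eq2 : n = 2.

Lemma t_elt_transvection : t = 1%:M + delta_mx (inord 0) (inord 1) :> 'M[F]_d.+1.
Proof.
apply/matrixP => i j; rewrite !mxE n_eq2 eqxx /= -!val_eqE /= !inordK; try lia.
by case: eqP => [->|]; case: eqP => [->|] /=; rewrite ?add0r ?addr0.
Qed.

Lemma mxrank_Fix_transvection : \rank (Fix t) = (d.+1 - n).+1.
Proof.
have i10 : (inord 1 == inord 0 :> 'I_d.+1) = false by rewrite ord_eq_inordF // inordK; lia.
pose u : 'rV[F]_d.+1 := delta_mx 0 (inord 1).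
apply: (mxrank_kermx_sub1_line (u := u)); first exact: leqW.
- by rewrite -mxrank_eq0 mxrank_delta.
- apply/rowP => j; rewrite mulmx_pid_mxE; case: ltnP => // le_n_j.
  by rewrite mxE ord_eq_inordF ?andbF //; lia.
- by move=> i j le_n_i; rewrite t_elt_outside ?le_n_i.
- by rewrite t_elt_transvection mulmxDr mulmx1 mul_delta_mx_0 ?addr0 // i10.
move=> v; rewrite t_elt_transvection mulmxDr mulmx1 => /(congr1 (fun w => w - v)).
rewrite addrAC !subrr add0r => vt.
have v0 : v 0 (inord 0) = 0.
  have := congr1 (fun w : 'rV_d.+1 => w 0 (inord 1)) vt.
  rewrite /= (mulmx_col_deltaE v (a := inord 0) (s := 1)) ?mulr1 ?mxE // => i.
  by rewrite mxE eqxx andbT mulr1.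
exists (v 0 (inord 1)); apply/rowP => j; rewrite mulmx_pid_mxE !mxE n_eq2.
case: ltnP => lt_j_2; last by rewrite ord_eq_inordF ?andbF ?mulr0 //; lia.
have [-> | j_neq1] := eqVneq j (inord 1); first by rewrite eqxx mulr1.
rewrite (_ : j = inord 0) ?v0 ?mulr0 //; apply/val_inj; move: j_neq1.
by rewrite ord_eq_inord /= ?inordK //; lia.
Qed.

End Transvection.

Section CharTwo.
Hypotheses (F_char2 : 2 \in [pchar F]) (n_odd : odd n).

Lemma mulmx_t_char2_mid (v : 'rV[F]_d.+1) k : (k.+1 < n)%N ->
  (v *m t) 0 (inord k) = v 0 (inord k.+1).
Proof.
move=> lt_k1_n; rewrite (mulmx_t_inord v (a := k.+1) (s := 1)) ?mulr1 //; try lia.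
move=> i lt_i_n; rewrite t_elt_inside ?inordK ?F_char2 ?z1_entry_mid ?mulr1 //; lia.
Qed.

Lemma mulmx_t_char2_last (v : 'rV[F]_d.+1) : (v *m t) 0 (inord n.-1) = v 0 (inord 0).
Proof.
rewrite (mulmx_t_inord v (a := 0) (s := 1)) ?mulr1 //; try lia.
move=> i lt_i_n; rewrite t_elt_inside ?inordK ?F_char2 ?z1_entry_last ?mulr1 //; lia.
Qed.

Lemma mxrank_Fix_t_char2 : \rank (Fix t) = (d.+1 - n).+1.
Proof.
pose u : 'rV[F]_d.+1 := \row_j ((j < n)%N)%:R.
apply: (mxrank_kermx_sub1_line (u := u)); first exact: leqW.
- apply/eqP => /rowP /(_ (inord 0)); rewrite !mxE inordK // (ltnW n_ge2).
  by move/eqP; rewrite oner_eq0.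
- by apply/rowP => j; rewrite mulmx_pid_mxE mxE; case: ltnP.
- by move=> i j le_n_i; rewrite t_elt_outside ?le_n_i.
- apply/rowP => j; case: (ltnP j n) => [lt_j_n | le_n_j]; last exact: mulmx_t_outside.
  rewrite -(inord_val j); have [j_last | j_mid] := eqVneq (j : nat) n.-1.
    have lt_n1_n : (n.-1 < n)%N by lia.
    by rewrite j_last mulmx_t_char2_last !mxE !inordK ?lt_n1_n ?(ltnW n_ge2) //; lia.
  have lt_j1_n : (j.+1 < n)%N by lia.
  by rewrite mulmx_t_char2_mid // !mxE !inordK ?lt_j1_n ?lt_j_n //; lia.
move=> v vt; exists (v 0 (inord 0)); apply/rowP => j; rewrite mulmx_pid_mxE !mxE.
have v_const : forall k, (0 <= k < n)%N -> v 0 (inord k) = v 0 (inord 0).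
  by apply: eq_from_succ => k _ lt_k1_n; rewrite -mulmx_t_char2_mid // vt.
case: ltnP => lt_j_n; rewrite ?mulr0 //.
by rewrite mulr1 -(v_const j) ?inord_val.
Qed.

End CharTwo.

Section OddChar.
Hypotheses (F_char : 2 \notin [pchar F]) (n_odd : odd n).

Lemma mulmx_t_oddchar_mid (v : 'rV[F]_d.+1) k : (0 < k)%N -> (k.+1 < n)%N ->
  (v *m t) 0 (inord k) = v 0 (inord k.+1).
Proof.
move=> k_gt0 lt_k1_n.
rewrite (mulmx_t_inord v (a := k.+1) (s := 1)) ?mulr1 //; try lia.
move=> i lt_i_n; rewrite t_elt_inside ?inordK ?(negbTE F_char) ?z2_entry_mid ?mulr1 //; lia.
Qed.

Lemma mulmx_t_oddchar_last (v : 'rV[F]_d.+1) : (v *m t) 0 (inord n.-1) = - v 0 (inord 1).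
Proof.
rewrite (mulmx_t_inord v (a := 1) (s := -1)) ?mulrN1 //; try lia.
move=> i lt_i_n; rewrite t_elt_inside ?inordK ?(negbTE F_char) ?z2_entry_last ?mulrN1 //; lia.
Qed.

Lemma delta0_mul_t : delta_mx 0 (inord 0) *m t = delta_mx 0 (inord 0) :> 'rV[F]_d.+1.
Proof.
rewrite -rowE; apply/rowP => j; rewrite [LHS]mxE [RHS]mxE eqxx /=.
case: (ltnP j n) => [lt_j_n | le_n_j]; last first.
  by rewrite t_elt_outside ?le_n_j ?orbT // eq_sym.
rewrite t_elt_inside ?inordK ?(negbTE F_char) ?z2_entry_row0 //; try lia.
by rewrite ord_eq_inord // eq_sym.
Qed.

Lemma mxrank_Fix_t_oddchar : \rank (Fix t) = (d.+1 - n).+1.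
Proof.
pose u : 'rV[F]_d.+1 := delta_mx 0 (inord 0).
apply: (mxrank_kermx_sub1_line (u := u)); first exact: leqW.
- by rewrite -mxrank_eq0 mxrank_delta.
- apply/rowP => j; rewrite mulmx_pid_mxE mxE; case: ltnP => // le_n_j.
  by rewrite ord_eq_inordF ?andbF //; lia.
- by move=> i j le_n_i; rewrite t_elt_outside ?le_n_i.
- exact: delta0_mul_t.
move=> v vt; exists (v 0 (inord 0)); apply/rowP => j; rewrite mulmx_pid_mxE !mxE.
have v_const : forall k, (1 <= k < n)%N -> v 0 (inord k) = v 0 (inord 1).
  by apply: eq_from_succ => k k_gt0 lt_k1_n; rewrite -mulmx_t_oddchar_mid // vt.
have v1 : v 0 (inord 1) = 0.
  have two_neq0 : (2%:R : F) != 0 by apply: contra F_char => two0; rewrite inE /= two0.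
  have /eqP : v 0 (inord 1) = - v 0 (inord 1).
    by rewrite -mulmx_t_oddchar_last vt v_const //; lia.
  by rewrite -subr_eq0 opprK -mulr2n -mulr_natl mulf_eq0 (negbTE two_neq0) => /eqP.
case: ltnP => [lt_j_n | le_n_j]; last by rewrite ord_eq_inordF ?andbF ?mulr0 //; lia.
have [-> | j_neq0] := eqVneq j (inord 0); first by rewrite eqxx mulr1.
rewrite andbF mulr0 -v1 -(v_const j) ?inord_val //.
by move: j_neq0; rewrite ord_eq_inord //; lia.
Qed.

End OddChar.

Lemma mxrank_Fix_t_elt : (n == 2) || odd n -> \rank (Fix t) = (d.+1 - n).+1.
Proof.
case/orP => [/eqP | n_odd]; first exact: mxrank_Fix_transvection.
by case: (boolP (2 \in [pchar F])) => F_char;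
  [apply: mxrank_Fix_t_char2 | apply: mxrank_Fix_t_oddchar].
Qed.

End TElement.

Theorem lemma7p7 (F : finFieldType) (d n : nat) (E : 'M[F]_d) :
  (2 <= n)%N -> (n < d)%N -> (n == 2%N) || odd n ->
  E \in unitmx -> \det E = 1 ->
  let T := invmx E *m t_elt F d n *m E in
  weak_doubling n T ->
  ((1 <= \rank (Vn F d n :&: Fix T)%MS)%N /\
   ((nprime d n < d)%N -> \rank (Vn F d n :&: Fix T)%MS = 1%N)) /\
  ((nprime d n < d)%N -> \rank (Fdn F d n :&: Fix T)%MS = (d - nprime d n)%N).
Proof.
move=> n_ge2 lt_n_d n_cases E_unit _ T [_ [dimVVT dimFFix]].
have dimFix : \rank (Fix T) = (d - n).+1.
  rewrite /Fix /T mxrank_kermx_conj_sub1 //.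
  by case: d lt_n_d {E E_unit T dimVVT dimFFix} => [//|d] lt_n_d; apply: mxrank_Fix_t_elt.
have dimV : \rank (Vn F d n) = n by rewrite rank_pid_mx // ltnW.
have dimFd : \rank (Fdn F d n) = (d - n)%N by rewrite rank_copid_mx // ltnW.
have := mxrank_cap_ge (Vn F d n) (Fix T); rewrite dimV dimFix => capV_ge.
split; [split => [|n'_lt_d] | move=> n'_lt_d]; first lia.
  have := mxrank_adds_mul_cap_kermx (Vn F d n) T.
  by rewrite -/(Fix T) dimVVT dimV; move: n'_lt_d; rewrite /nprime; lia.
have := mxrank_sum_cap (Fdn F d n) (Fix T).
by rewrite dimFFix // dimFd dimFix; move: n'_lt_d; rewrite /nprime; lia.
Qed.
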